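(* Let $n\ge 1$ be an integer and let $a,b,c:\{0,1,\dots,n+1\}\to\mathbb{R}$ with $a(k)\neq 0$ and $c(k)\neq 0$ for $k=0,\dots,n$. Let $\Phi_{a,b,c},\Psi_{a,b,c}:\{0,\dots,n+1\}\to\mathbb{R}$ be the unique solutions of the homogeneous equation $$-a(k)u(k+1)+b(k)u(k)-c(k-1)u(k-1)=0,\qquad k=1,\dots,n,$$ determined respectively by $\Phi_{a,b,c}(0)=a(0)$, $\Phi_{a,b,c}(1)=b(0)$, and by $\Psi_{a,b,c}(n)=b(n+1)$, $\Psi_{a,b,c}(n+1)=c(n)$. Then for every $k=0,\dots,n+1$, $$\Phi_{a,b,c}(k)=a(0)\Big(\prod_{s=0}^{k-1}a(s)\Big)^{-1}\Phi_{\mathsf J}(k),\qquad \Psi_{a,b,c}(k)=c(n)\Big(\prod_{s=k}^{n}c(s)\Big)^{-1}\Psi_{\mathsf J}(k),$$ and moreover $$b(0)\Psi_{a,b,c}(0)-a(0)\Psi_{a,b,c}(1)=D_{\mathsf J}\Big(\prod_{s=0}^{n-1}c(s)\Big)^{-1}.$$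
   Context: Empty products equal $1$ and empty sums equal $0$. For $m\in\mathbb{N}$ and a sequence $x$, the shift $x_m$ is $x_m(j)=x(j+m)$; $ac$ denotes the pointwise product $(ac)(j)=a(j)c(j)$. Chebyshev functions: for sequences $x,y$ set $P_{-1}(x,y)=0$, $P_0(x,y)=1$, and for $k\ge1$ $$P_k(x,y)=\sum_{m=0}^{\lfloor k/2\rfloor}(-1)^m\sum_{\alpha\in\ell_k^m}x^{\bar\alpha}y^{\alpha},$$ where: for $\alpha=(\alpha_1,\dots,\alpha_k)\in\{0,1\}^k$, $x^\alpha=\prod_{j=1}^k x(j)^{\alpha_j}$ and $|\alpha|=\sum_j\alpha_j$; $\ell_k^0=\{(0,\dots,0)\}$; for $m\ge1$, $\ell_k^m$ is the set of $\alpha\in\{0,1\}^k$ with $\alpha_k=0$, $|\alpha|=m$, and whose positions of ones $i_1<\dots<i_m$ satisfy $i_{j+1}-i_j\ge2$ for $j=1,\dots,m-1$; and $\bar\alpha\in\{0,1\}^k$ is defined by $\bar\alpha_{i_j}=\bar\alpha_{i_j+1}=0$ for $j=1,\dots,m$ and $\bar\alpha_i=1$ otherwise. Define $\Phi_{\mathsf J}(0)=1$, $\Phi_{\mathsf J}(k)=b(0)P_{k-1}(b,ac)-a(0)c(0)P_{k-2}(b_1,a_1c_1)$ for $k=1,\dots,n+1$; $\Psi_{\mathsf J}(k)=b(n+1)P_{n-k}(b_k,a_kc_k)-a(n)c(n)P_{n-k-1}(b_k,a_kc_k)$ for $k=0,\dots,n$, and $\Psi_{\mathsf J}(n+1)=1$;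 $D_{\mathsf J}=b(0)\big[b(n+1)P_n(b,ac)-a(n)c(n)P_{n-1}(b,ac)\big]-a(0)c(0)\big[b(n+1)P_{n-1}(b_1,a_1c_1)-a(n)c(n)P_{n-2}(b_1,a_1c_1)\big]$. *)

From HB Require Import structures.
From mathcomp Require Import all_boot all_order all_algebra.
Set Implicit Arguments. Unset Strict Implicit. Unset Printing Implicit Defensive.
Import Order.TTheory GRing.Theory Num.Theory.
Local Open Scope ring_scope.

Section Cheb.
Variable R : comRingType.

Definition shiftseq (x : nat -> R) (m : nat) : nat -> R := fun j => x (j + m)%N.
Definition pwmul (x y : nat -> R) : nat -> R := fun j => x j * y j.

(* A multi-index alpha in {0,1}^k is represented by its set of ones
   A : {set 'I_k}; the 0-based index i corresponds to position i+1. *)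
Definition ell (k m : nat) : {set {set 'I_k}} :=
  if m == 0%N then [set set0]
  else [set A : {set 'I_k} |
          [&& [forall i in A, (i : nat) != k.-1],
              #|A| == m &
              [forall i in A, forall j in A, (i < j)%N ==> (i.+1 < j)%N]]].

Definition barset (k : nat) (A : {set 'I_k}) : {set 'I_k} :=
  [set i : 'I_k | [forall j in A, (i != j) && ((i : nat) != j.+1)]].

Definition mpow (k : nat) (x : nat -> R) (A : {set 'I_k}) : R :=
  \prod_(i in A) x (i.+1).

Definition chebN (k : nat) (x y : nat -> R) : R :=
  \sum_(0 <= m < (k./2).+1)
     (-1) ^+ m * \sum_(A in ell k m) mpow x (barset A) * mpow y A.

(* P_k for integer k: P_{-1} = 0 (only negative index that occurs) *)
Definition cheb (k : int) (x y : nat -> R) : R :=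
  match k with Posz k' => chebN k' x y | Negz _ => 0 end.

Definition PhiJ (a b c : nat -> R) (k : nat) : R :=
  if k == 0%N then 1
  else b 0%N * cheb (k%:Z - 1) b (pwmul a c)
       - a 0%N * c 0%N * cheb (k%:Z - 2) (shiftseq b 1) (shiftseq (pwmul a c) 1).

Definition PsiJ (n : nat) (a b c : nat -> R) (k : nat) : R :=
  if k == n.+1 then 1
  else b n.+1 * cheb (n%:Z - k%:Z) (shiftseq b k) (shiftseq (pwmul a c) k)
       - a n * c n * cheb (n%:Z - k%:Z - 1) (shiftseq b k) (shiftseq (pwmul a c) k).

Definition DJ (n : nat) (a b c : nat -> R) : R :=
  b 0%N * (b n.+1 * cheb n%:Z b (pwmul a c) - a n * c n * cheb (n%:Z - 1) b (pwmul a c))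
  - a 0%N * c 0%N * (b n.+1 * cheb (n%:Z - 1) (shiftseq b 1) (shiftseq (pwmul a c) 1)
                     - a n * c n * cheb (n%:Z - 2) (shiftseq b 1) (shiftseq (pwmul a c) 1)).
End Cheb.

From HB Require Import structures.
From mathcomp Require Import all_boot all_order all_algebra.
From mathcomp Require Import ring zify.
From Stdlib Require Import FunctionalExtensionality.
Import Order.TTheory GRing.Theory Num.Theory.
Local Open Scope ring_scope.
Set Implicit Arguments. Unset Strict Implicit. Unset Printing Implicit Defensive.

(* Splitting the admissible multi-indices of length k+2 according to the last
   admissible position shows that the Chebyshev sums satisfy
   P_{k+1}(x, y) = x(k+1) P_k(x, y) - y(k) P_{k-1}(x, y), and an induction on
   this recurrence gives the expansion from the front
   P_{k+1}(x, y) = x(1) P_k(x_1, y_1) - y(1) P_{k-1}(x_2, y_2).  Hence Phi_J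
   solves the Jacobi equation with coefficients (1, b, ac) and Psi_J the one
   with coefficients (ac, b, 1).  Multiplying by the gauge factors
   a(0) / prod a and c(n) / prod c turns them into solutions of the equation
   with coefficients (a, b, c) having the prescribed values at 0, 1 (resp. at
   n, n+1); since a and c do not vanish, such solutions are unique.  The value
   of b(0) Psi(0) - a(0) Psi(1) is then read off the gauge factors. *)

Section ChebyshevSum.
Variable R : comRingType.
Implicit Types (x y : nat -> R) (p q : nat -> bool).

Definition nat_mem k (A : {set 'I_k}) (i : nat) : bool := [exists j in A, val j == i].

Definition nonadjacent k p := all (fun i => p i ==> ~~ p i.+1) (iota 0 k).

Definition admissible k p := if k is k'.+1 then nonadjacent k' p && ~~ p k' else true.

(* At [i = 0] the second conjunct repeats the first, as [0.-1 = 0]. *)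
Definition bar p i := ~~ p i && ~~ p i.-1.

Definition bitprod k x p := \prod_(0 <= i < k) (if p i then x i.+1 else 1).

(* The sign (-1)^|alpha| of P_k is absorbed into y: (-1)^|alpha| y^alpha = (-y)^alpha. *)
Definition cheb_term k x y p : R :=
  if admissible k p then bitprod k x (bar p) * bitprod k (fun j => - y j) p else 0.

Lemma nat_mem_ord k (A : {set 'I_k}) (i : 'I_k) : nat_mem A i = (i \in A).
Proof.
apply/existsP/idP => [[j /andP[jA /eqP /val_inj <-]] //|iA].
by exists i; rewrite iA eqxx.
Qed.

Lemma nat_mem_ge k (A : {set 'I_k}) i : (k <= i)%N -> nat_mem A i = false.
Proof.
move=> ki; apply/existsP => -[j /andP[_ /eqP e]].
by have := ltn_ord j; rewrite e ltnNge ki.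
Qed.

Lemma nonadjacentS k p : nonadjacent k.+1 p = nonadjacent k p && (p k ==> ~~ p k.+1).
Proof.
rewrite /nonadjacent.
have -> : iota 0 k.+1 = iota 0 k ++ [:: k] by rewrite -addn1 iotaD.
by rewrite all_cat /= andbT.
Qed.

Lemma admissibleP k p :
  reflect (forall i, (i < k)%N -> p i -> (i.+1 < k)%N /\ ~~ p i.+1) (admissible k p).
Proof.
case: k => [|k] /=; first by apply: ReflectT.
apply: (iffP andP) => [[/allP na pk] i ik pi|H]; last first.
  split; last by apply/negP => /(H k (ltnSn k)) []; rewrite ltnn.
  by apply/allP => i; rewrite mem_iota /= => ik; apply/implyP => /(H i (leqW ik)) [].
have ik' : (i < k)%N.
  by move: ik; rewrite ltnS leq_eqVlt => /orP[/eqP ei|//]; move: pk; rewrite -ei pi.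
by split; [|apply: (implyP (na i _))]; rewrite ?mem_iota.
Qed.

Lemma eq_bitprod k x p q :
  (forall i, (i < k)%N -> p i = q i) -> bitprod k x p = bitprod k x q.
Proof. by move=> e; apply: eq_big_nat => i /andP[_ /e ->]. Qed.

Lemma eq_nonadjacent k p q :
  (forall i, (i <= k)%N -> p i = q i) -> nonadjacent k p = nonadjacent k q.
Proof.
move=> e; apply: eq_in_all => i; rewrite mem_iota /= => ik.
by rewrite !e // ltnW.
Qed.

Lemma bitprodS k x p : bitprod k.+1 x p = bitprod k x p * (if p k then x k.+1 else 1).
Proof. by rewrite /bitprod big_nat_recr. Qed.

Lemma bitprod_set k x p (A : {set 'I_k}) :
  (forall i : 'I_k, p i = (i \in A)) -> bitprod k x p = \prod_(i in A) x i.+1.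
Proof.
by move=> pA; rewrite [RHS]big_mkcond /bitprod big_mkord; apply: eq_bigr => i _; rewrite pA.
Qed.

Lemma bar_barset k (A : {set 'I_k}) (i : 'I_k) : bar (nat_mem A) i = (i \in barset A).
Proof.
apply/esym; rewrite inE /bar; apply/forall_inP/andP => [H|[niA ni1A] j jA].
  have niA : ~~ nat_mem A i by rewrite nat_mem_ord; apply/negP => /H; rewrite eqxx.
  split=> //; case Ei : (val i) => [|i'] /=; first by rewrite -Ei.
  apply/existsP => -[j /andP[jA /eqP e]].
  by have := H j jA; rewrite Ei e eqxx andbF.
apply/andP; split; first by apply: contraNneq niA => ->; rewrite nat_mem_ord.
by apply/eqP => e; move: ni1A; rewrite e /= nat_mem_ord jA.
Qed.

Lemma admissible_set k (A : {set 'I_k}) :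
  [forall i in A, (i : nat) != k.-1] &&
  [forall i in A, forall j in A, (i < j)%N ==> (i.+1 < j)%N] = admissible k (nat_mem A).
Proof.
apply/andP/admissibleP => [[/forall_inP last /forall_inP sparse] i ik|H].
  rewrite -[i]/(val (Ordinal ik)) nat_mem_ord => iA; split.
    by have := last _ iA; rewrite /=; lia.
  apply/existsP => -[j /andP[jA /eqP e]].
  by have /forall_inP /(_ j jA) := sparse _ iA; rewrite /= e ltnSn ltnn.
split; apply/forall_inP => i iA.
  by have := H i (ltn_ord i); rewrite nat_mem_ord => /(_ iA) [+ _]; lia.
have [ik ni1A] : (i.+1 < k)%N /\ ~~ nat_mem A i.+1 by apply: H; rewrite ?nat_mem_ord.
apply/forall_inP => j jA; apply/implyP => ij; rewrite ltn_neqAle ij andbT.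
by apply: contraNneq ni1A => ->; rewrite nat_mem_ord.
Qed.

Lemma mem_ell k m (A : {set 'I_k}) :
  (A \in ell k m) = admissible k (nat_mem A) && (#|A| == m).
Proof.
rewrite /ell; case: eqP => [->|_]; last by rewrite inE andbCA andbC admissible_set.
rewrite inE cards_eq0; case: eqP => [->|_]; last by rewrite andbF.
rewrite andbT; apply/esym/admissibleP => i ik.
by rewrite -[i]/(val (Ordinal ik)) nat_mem_ord inE.
Qed.

(* A and its shift succ @: A are disjoint subsets of 'I_k of the same size. *)
Lemma admissible_card k (A : {set 'I_k}) : admissible k (nat_mem A) -> (2 * #|A| <= k)%N.
Proof.
move/admissibleP => H.
have HA (i : 'I_k) : i \in A -> (i.+1 < k)%N /\ ~~ nat_mem A i.+1.
  by rewrite -nat_mem_ord; apply: H.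
case: k A H HA => [|k] A _ HA; first by have := max_card A; rewrite card_ord; lia.
pose succ (i : 'I_k.+1) : 'I_k.+1 := inord i.+1.
have succE i : i \in A -> val (succ i) = i.+1 by move=> /HA[ik _]; rewrite /succ /= inordK.
have succ_inj : {in A &, injective succ}.
  by move=> i j iA jA /(congr1 val); rewrite !succE // => -[] /val_inj.
have disj : [disjoint A & succ @: A].
  rewrite -setI_eq0; apply/eqP/setP => j; rewrite !inE; apply/negP => /andP[jA].
  case/imsetP => i iA ej; have [_] := HA i iA.
  by rewrite -(succE i iA) -ej nat_mem_ord jA.
have := (leq_card_setU A (succ @: A)).2; rewrite disj card_in_imset // => /eqP.
by rewrite mul2n -addnn => <-; have := max_card (A :|: succ @: A); rewrite card_ord.
Qed.

Lemma chebN_sum k x y : chebN k x y = \sum_(A : {set 'I_k}) cheb_term k x y (nat_mem A).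
Proof.
rewrite /chebN; under eq_bigr => m _ do rewrite big_mkcond mulr_sumr.
rewrite exchange_big /=; apply: eq_bigr => A _; rewrite /cheb_term.
case: ifP => adm; last by rewrite big1 // => m _; rewrite mem_ell adm mulr0.
rewrite (bigD1_seq #|A|) ?iota_uniq //=; last first.
  rewrite mem_index_iota ltnS -[#|A|]half_double; apply: half_leq.
  by rewrite -mul2n; apply: admissible_card.
rewrite big1 => [|m /negbTE neA]; last by rewrite mem_ell adm eq_sym neA mulr0.
rewrite mem_ell adm eqxx addr0 (bitprod_set _ (bar_barset A)) (bitprod_set _ (nat_mem_ord A)).
by rewrite prodrN /mpow mulrCA mulrA.
Qed.

Definition set_extend k (B : {set 'I_k}) (b : bool) : {set 'I_k.+1} :=
  [set j : 'I_k.+1 | if unlift ord_max j is Some i then i \in B else b].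

Lemma nat_mem_extend k (B : {set 'I_k}) b :
  nat_mem (set_extend B b) = fun i => (b && (i == k)) || nat_mem B i.
Proof.
apply: functional_extensionality => i; case: (ltngtP i k) => [ik|ki|->].
- have := nat_mem_ord (set_extend B b) (lift ord_max (Ordinal ik)).
  rewrite lift_max /= => ->; rewrite inE liftK andbF.
  by have /= -> := nat_mem_ord B (Ordinal ik).
- by rewrite !nat_mem_ge ?andbF // ltnW.
- by rewrite -[k]/(val (@ord_max k)) nat_mem_ord inE unlift_none nat_mem_ge ?andbT ?orbF.
Qed.

Lemma sum_subsetsS k (f : (nat -> bool) -> R) :
  \sum_(A : {set 'I_k.+1}) f (nat_mem A) =
  \sum_(B : {set 'I_k}) f (nat_mem B)
  + \sum_(B : {set 'I_k}) f (fun i => (i == k) || nat_mem B i).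
Proof.
pose restrict (A : {set 'I_k.+1}) := ([set i : 'I_k | lift ord_max i \in A], ord_max \in A).
have extendK : cancel (fun P => set_extend P.1 P.2) restrict.
  move=> [B b]; rewrite /restrict inE unlift_none; congr pair.
  by apply/setP => i; rewrite !inE liftK.
have restrictK : cancel restrict (fun P => set_extend P.1 P.2).
  move=> A; apply/setP => j; rewrite inE.
  by case: (unliftP ord_max j) => [i ->|->]; rewrite /= ?inE.
rewrite (reindex (fun P => set_extend P.1 P.2)) /=; last by exists restrict.
transitivity (\sum_(B : {set 'I_k}) \sum_(b : bool) f (nat_mem (set_extend B b))).
  by rewrite pair_big; apply: eq_bigr => -[].
rewrite -big_split; apply: eq_bigr => B _.
by rewrite big_bool /= addrC !nat_mem_extend.
Qed.

Lemma cheb_term_top_out k x y p : (forall i, (k <= i)%N -> p i = false) ->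
  cheb_term k.+2 x y p = x k.+2 * cheb_term k.+1 x y p.
Proof.
move=> hi; have barS : bar p k.+1 by rewrite /bar /= !hi.
rewrite /cheb_term /= nonadjacentS !(bitprodS k.+1) barS !hi //=.
by case: (nonadjacent k p); rewrite /= ?mulr0 //; ring.
Qed.

Lemma nonadjacent_top k p q :
  (forall i, (i < k)%N -> q i = p i) -> q k -> nonadjacent k q = admissible k p.
Proof.
case: k => [//|k] qp qk; rewrite nonadjacentS qk qp // implybF; congr andb.
by apply: eq_nonadjacent => i ik; rewrite qp ?ltnS.
Qed.

Lemma cheb_term_top_in k x y p : (forall i, (k <= i)%N -> p i = false) ->
  cheb_term k.+2 x y (fun i => (i == k) || p i) = - y k.+1 * cheb_term k x y p.
Proof.
move=> hi; set q := fun i => _.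
have qk : q k by rewrite /q eqxx.
have qk1 : q k.+1 = false by rewrite /q hi // orbF gtn_eqF.
have qp i : (i < k)%N -> q i = p i by move=> ik; rewrite /q ltn_eqF.
have barq : bitprod k x (bar q) = bitprod k x (bar p).
  by apply: eq_bitprod => i ik; rewrite /bar !qp //; lia.
rewrite /cheb_term /= !nonadjacentS qk qk1 (nonadjacent_top qp qk) !bitprodS barq.
rewrite (eq_bitprod _ qp) /bar qk qk1 /=.
by case: (admissible k p); rewrite /= ?mulr0 //; ring.
Qed.

Lemma cheb_term_last_in k x y p : cheb_term k.+1 x y (fun i => (i == k) || p i) = 0.
Proof. by rewrite /cheb_term /= eqxx andbF. Qed.

Lemma sum_subsets0 (F : {set 'I_0} -> R) : \sum_(A : {set 'I_0}) F A = F set0.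
Proof. by rewrite (big_pred1 set0) // => A; apply/esym/eqP/setP => -[]. Qed.

Lemma chebN0 x y : chebN 0 x y = 1.
Proof. by rewrite chebN_sum sum_subsets0 /cheb_term /= /bitprod !big_geq ?mulr1. Qed.

Lemma chebN1 x y : chebN 1 x y = x 1%N.
Proof.
rewrite chebN_sum sum_subsetsS !sum_subsets0 cheb_term_last_in addr0.
by rewrite /cheb_term /= !bitprodS /bitprod !big_geq // /bar /= !nat_mem_ge //=; ring.
Qed.

Lemma chebN_rec k x y :
  chebN k.+2 x y = x k.+2 * chebN k.+1 x y - y k.+1 * chebN k x y.
Proof.
rewrite !chebN_sum (sum_subsetsS k.+1) [X in _ + X]big1 ?addr0; last first.
  by move=> B _; apply: cheb_term_last_in.
rewrite sum_subsetsS (sum_subsetsS k (cheb_term k.+1 x y)).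
rewrite [X in _ * (_ + X)]big1 ?addr0; last first.
  by move=> B _; apply: cheb_term_last_in.
rewrite !mulr_sumr -sumrB -big_split; apply: eq_bigr => B _.
by rewrite cheb_term_top_out ?cheb_term_top_in ?mulNr // => i; apply: nat_mem_ge.
Qed.

End ChebyshevSum.

Section ChebyshevRecurrences.
Variable R : comRingType.
Implicit Types x y : nat -> R.

Lemma shiftseq0 x : shiftseq x 0 = x.
Proof. by apply: functional_extensionality => j; rewrite /shiftseq addn0. Qed.

Lemma shiftseq_shift x i j : shiftseq (shiftseq x i) j = shiftseq x (i + j).
Proof. by apply: functional_extensionality => k; rewrite /shiftseq addnA addnAC. Qed.

Lemma chebN_shift m x y :
  chebN m.+2 x y = x 1%N * chebN m.+1 (shiftseq x 1) (shiftseq y 1)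
                   - y 1%N * chebN m (shiftseq x 2) (shiftseq y 2).
Proof.
elim/ltn_ind: m x y => -[|[|m]] IH x y.
- by rewrite chebN_rec !chebN1 !chebN0 /shiftseq /=; ring.
- by rewrite !chebN_rec !chebN1 !chebN0 /shiftseq /=; ring.
rewrite chebN_rec (IH m.+1) // (IH m _ x y) // [chebN m.+3 _ _]chebN_rec.
by rewrite [chebN m.+2 (shiftseq x 2) _]chebN_rec /shiftseq !addn1 !addn2; ring.
Qed.

Lemma PoszSB1 m : m.+1%:Z - 1 = m.
Proof. lia. Qed.

Lemma cheb_rec m x y : cheb m.+1 x y = x m.+1 * cheb m x y - y m * cheb (m%:Z - 1) x y.
Proof.
case: m => [|m]; first by rewrite /= chebN1 chebN0; ring.
by rewrite PoszSB1 /= chebN_rec.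
Qed.

Lemma cheb_shift m x y :
  cheb m.+1 x y = x 1%N * cheb m (shiftseq x 1) (shiftseq y 1)
                  - y 1%N * cheb (m%:Z - 1) (shiftseq x 2) (shiftseq y 2).
Proof.
case: m => [|m]; first by rewrite /= chebN1 chebN0; ring.
by rewrite PoszSB1 /= chebN_shift.
Qed.

End ChebyshevRecurrences.

Section JacobiEquation.
Variable R : comRingType.
Implicit Types a b c u w g : nat -> R.

Definition jacobi_eq a b c u k := - a k * u k.+1 + b k * u k - c k.-1 * u k.-1 = 0.

Lemma jacobi_eqP a b c u k :
  jacobi_eq a b c u k <-> b k * u k = a k * u k.+1 + c k.-1 * u k.-1.
Proof.
rewrite /jacobi_eq; split=> [e|->]; last by ring.
by apply/eqP; rewrite -subr_eq0 -e; apply/eqP; ring.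
Qed.

Lemma jacobi_eq_gauge a b c a' c' g w k :
  a k * g k.+1 = a' k * g k -> c k.-1 * g k.-1 = c' k.-1 * g k ->
  jacobi_eq a' b c' w k -> jacobi_eq a b c (fun j => g j * w j) k.
Proof.
rewrite /jacobi_eq => ea ec e; rewrite -[RHS](mulr0 (g k)) -e.
by rewrite !mulrA !mulNr ea ec; ring.
Qed.

End JacobiEquation.

Section JacobiSolutions.
Variables (R : comRingType) (a b c : nat -> R).

Lemma PhiJS j : PhiJ a b c j.+1 = b 0%N * cheb j b (pwmul a c)
  - a 0%N * c 0%N * cheb (j%:Z - 1) (shiftseq b 1) (shiftseq (pwmul a c) 1).
Proof. by rewrite /PhiJ PoszSB1; have -> : j.+1%:Z - 2 = j%:Z - 1 by lia. Qed.

Lemma PhiJ1 : PhiJ a b c 1 = b 0%N.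
Proof. by rewrite PhiJS /= chebN0; ring. Qed.

Lemma PhiJ_jacobi k : (1 <= k)%N -> jacobi_eq (fun _ => 1) b (pwmul a c) (PhiJ a b c) k.
Proof.
case: k => // j _; apply/jacobi_eqP; rewrite /= !PhiJS PoszSB1 cheb_rec.
case: j => [|j]; first by rewrite /PhiJ /= !chebN0 /pwmul; ring.
rewrite PhiJS !PoszSB1 [cheb j.+1 (shiftseq b 1) _]cheb_rec.
by rewrite /shiftseq /pwmul !addn1; ring.
Qed.

Lemma PsiJ_last n : PsiJ n a b c n.+1 = 1.
Proof. by rewrite /PsiJ eqxx. Qed.

Lemma PsiJE n j d : n = (j + d)%N -> PsiJ n a b c j =
  b n.+1 * cheb d (shiftseq b j) (shiftseq (pwmul a c) j)
  - a n * c n * cheb (d%:Z - 1) (shiftseq b j) (shiftseq (pwmul a c) j).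
Proof.
move=> ->; rewrite /PsiJ ifF; last by apply/eqP; lia.
by have -> : (j + d)%N%:Z - j%:Z = d by lia.
Qed.

Lemma PsiJ_n n : PsiJ n a b c n = b n.+1.
Proof. by rewrite (@PsiJE _ n 0) ?addn0 //= chebN0; ring. Qed.

Lemma PsiJ_jacobi n k : (1 <= k <= n)%N ->
  jacobi_eq (pwmul a c) b (fun _ => 1) (PsiJ n a b c) k.
Proof.
case: k => // j /andP[_ jn]; apply/jacobi_eqP; rewrite /=.
have [d ->] : exists d, n = (j + d.+1)%N by exists (n - j.+1)%N; lia.
rewrite (@PsiJE _ j d.+1) // (@PsiJE _ j.+1 d) ?addSnnS // cheb_shift PoszSB1.
rewrite !shiftseq_shift !addn1 !addn2; case: d => [|d].
  by rewrite addn1 PsiJ_last /= !chebN0 /shiftseq /pwmul /= add1n; ring.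
rewrite (@PsiJE _ j.+2 d) ?addnS // [cheb d.+1 (shiftseq b j) _]cheb_shift PoszSB1.
by rewrite !shiftseq_shift !addn1 !addn2 /shiftseq /pwmul !add1n; ring.
Qed.

Lemma DJ_PsiJ n : (1 <= n)%N ->
  DJ n a b c = b 0%N * PsiJ n a b c 0 - a 0%N * c 0%N * PsiJ n a b c 1.
Proof.
move=> n1; rewrite (@PsiJE _ 0 n) // (@PsiJE _ 1 n.-1) ?add1n ?prednK // !shiftseq0.
by rewrite /DJ -predn_int //; have -> : n.-1%:Z - 1 = n%:Z - 2 by lia.
Qed.

End JacobiSolutions.

Lemma eq_two_step (T : Type) (u v : nat -> T) m :
  u 0%N = v 0%N -> u 1%N = v 1%N ->
  (forall k, (k < m)%N -> u k = v k -> u k.+1 = v k.+1 -> u k.+2 = v k.+2) ->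
  forall k, (k <= m.+1)%N -> u k = v k.
Proof.
move=> e0 e1 step.
suff both k : (k <= m)%N -> u k = v k /\ u k.+1 = v k.+1.
  by case=> [|k] km; [case: (both 0%N) | case: (both k)].
elim: k => [//|k IH] km; have [ek ek1] := IH (ltnW km).
by split; last apply: step.
Qed.

Section JacobiUniqueness.
Variable R : idomainType.
Implicit Types a b c u v : nat -> R.

Lemma jacobi_eq_uniq_fwd a b c u v n :
  (forall k, (1 <= k <= n)%N -> a k != 0) ->
  (forall k, (1 <= k <= n)%N -> jacobi_eq a b c u k) ->
  (forall k, (1 <= k <= n)%N -> jacobi_eq a b c v k) ->
  u 0%N = v 0%N -> u 1%N = v 1%N -> forall k, (k <= n.+1)%N -> u k = v k.
Proof.
move=> ha hu hv u0 u1; apply: eq_two_step => // k kn e0 e1.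
have kn' : (1 <= k.+1 <= n)%N by [].
have /jacobi_eqP /= Eu := hu _ kn'; have /jacobi_eqP /= Ev := hv _ kn'.
apply: (mulfI (ha _ kn')); apply: (addIr (c k * v k)).
by rewrite -Ev -e0 -Eu e1.
Qed.

Lemma jacobi_eq_uniq_bwd a b c u v n :
  (forall k, (k < n)%N -> c k != 0) ->
  (forall k, (1 <= k <= n)%N -> jacobi_eq a b c u k) ->
  (forall k, (1 <= k <= n)%N -> jacobi_eq a b c v k) ->
  u n = v n -> u n.+1 = v n.+1 -> forall k, (k <= n.+1)%N -> u k = v k.
Proof.
move=> hc hu hv en en1 k kn.
have step i : (i < n)%N -> u (n.+1 - i)%N = v (n.+1 - i)%N ->
    u (n.+1 - i.+1)%N = v (n.+1 - i.+1)%N -> u (n.+1 - i.+2)%N = v (n.+1 - i.+2)%N.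
  move=> ilt; have jn : (1 <= n - i <= n)%N by lia.
  have -> : (n.+1 - i = (n - i).+1)%N by lia.
  have -> : (n.+1 - i.+1 = n - i)%N by lia.
  have -> : (n.+1 - i.+2 = (n - i).-1)%N by lia.
  move=> e1 e0; have /jacobi_eqP Eu := hu _ jn; have /jacobi_eqP Ev := hv _ jn.
  apply: (mulfI (hc (n - i).-1 _)); first by lia.
  by apply: (addrI (a (n - i)%N * v (n - i).+1)); rewrite -Ev -e1 -Eu e0.
have := eq_two_step (u := fun i => u (n.+1 - i)%N) (v := fun i => v (n.+1 - i)%N) _ _ step.
by rewrite subn0 subn1 => /(_ en1 en (n.+1 - k)%N (leq_subr _ _)); rewrite subKn.
Qed.

End JacobiUniqueness.

Section JacobiGauge.
Variable R : fieldType.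
Implicit Types a b c w : nat -> R.

Definition gauge_fwd a j := a 0%N * (\prod_(0 <= s < j) a s)^-1.

Definition gauge_bwd n c j := c n * (\prod_(j <= s < n.+1) c s)^-1.

Lemma gauge_fwdS a j : a j != 0 -> a j * gauge_fwd a j.+1 = gauge_fwd a j.
Proof.
by move=> aj; rewrite /gauge_fwd big_nat_recr //= invfM mulrCA (mulrCA (a j)) mulfV ?mulr1.
Qed.

Lemma gauge_bwdS n c j : (j <= n)%N -> c j != 0 -> c j * gauge_bwd n c j = gauge_bwd n c j.+1.
Proof. by move=> jn cj; rewrite /gauge_bwd big_ltn ?ltnS // invfM mulrCA mulVKf. Qed.

Lemma gauge_bwd0 n c : c n != 0 -> gauge_bwd n c 0 = (\prod_(0 <= s < n) c s)^-1.
Proof. by move=> cn; rewrite /gauge_bwd big_nat_recr //= invfM mulrCA mulfV ?mulr1. Qed.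

Lemma jacobi_eq_gauge_fwd a b c w k : (1 <= k)%N -> a k != 0 -> a k.-1 != 0 ->
  jacobi_eq (fun _ => 1) b (pwmul a c) w k ->
  jacobi_eq a b c (fun j => gauge_fwd a j * w j) k.
Proof.
case: k => // k _ ak ak1; apply: jacobi_eq_gauge; first by rewrite mul1r gauge_fwdS.
by rewrite /pwmul /= [a k * _]mulrC -mulrA gauge_fwdS.
Qed.

Lemma jacobi_eq_gauge_bwd n a b c w k : (1 <= k <= n)%N -> c k != 0 -> c k.-1 != 0 ->
  jacobi_eq (pwmul a c) b (fun _ => 1) w k ->
  jacobi_eq a b c (fun j => gauge_bwd n c j * w j) k.
Proof.
case: k => // k /andP[_ kn] ck ck1; apply: jacobi_eq_gauge.
  by rewrite /pwmul -mulrA gauge_bwdS.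
by rewrite mul1r gauge_bwdS // ltnW.
Qed.

End JacobiGauge.

Unset Implicit Arguments.

Theorem lemma4p1 (R : realFieldType) (n : nat) (a b c Phi Psi : nat -> R) :
  (1 <= n)%N ->
  (forall k, (k <= n)%N -> a k != 0 /\ c k != 0) ->
  (forall k, (1 <= k <= n)%N ->
     - a k * Phi k.+1 + b k * Phi k - c k.-1 * Phi k.-1 = 0) ->
  Phi 0%N = a 0%N -> Phi 1%N = b 0%N ->
  (forall k, (1 <= k <= n)%N ->
     - a k * Psi k.+1 + b k * Psi k - c k.-1 * Psi k.-1 = 0) ->
  Psi n = b n.+1 -> Psi n.+1 = c n ->
  (forall k, (k <= n.+1)%N ->
     Phi k = a 0%N * (\prod_(0 <= s < k) a s)^-1 * PhiJ a b c k /\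
     Psi k = c n * (\prod_(k <= s < n.+1) c s)^-1 * PsiJ n a b c k) /\
  b 0%N * Psi 0%N - a 0%N * Psi 1%N = DJ n a b c * (\prod_(0 <= s < n) c s)^-1.
Proof.
move=> n1 nz hPhi Phi0 Phi1 hPsi Psin Psin1.
have anz k : (k <= n)%N -> a k != 0 by case/nz.
have cnz k : (k <= n)%N -> c k != 0 by case/nz.
have PhiE : forall k, (k <= n.+1)%N -> Phi k = gauge_fwd a k * PhiJ a b c k.
  apply: (jacobi_eq_uniq_fwd (a := a) (b := b) (c := c)) => //.
  - by move=> k /andP[_ /anz].
  - move=> k /andP[k1 kn].
    by apply: (jacobi_eq_gauge_fwd k1 (anz _ kn) _ (PhiJ_jacobi _ _ _ k1)); apply: anz; lia.
  - by rewrite /gauge_fwd big_geq // invr1 /PhiJ /= !mulr1.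
  - by rewrite /gauge_fwd big_nat1 PhiJ1 mulfV ?mul1r ?anz.
have PsiE : forall k, (k <= n.+1)%N -> Psi k = gauge_bwd n c k * PsiJ n a b c k.
  apply: (jacobi_eq_uniq_bwd (a := a) (b := b) (c := c)) => //.
  - by move=> k /ltnW /cnz.
  - move=> k kn; have [k1 kn'] := andP kn.
    by apply: (jacobi_eq_gauge_bwd kn (cnz _ kn') _ (PsiJ_jacobi _ _ _ kn)); apply: cnz; lia.
  - by rewrite /gauge_bwd big_nat1 PsiJ_n mulfV ?mul1r ?cnz.
  - by rewrite /gauge_bwd big_geq // invr1 mulr1 PsiJ_last mulr1.
split=> [k kn|]; first by rewrite PhiE ?PsiE.
rewrite !PsiE // DJ_PsiJ // -gauge_bwdS ?cnz // gauge_bwd0 ?cnz //; ring.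
Qed.
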